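(* In the setting of the context, consider the two families of linear inequalities $$x_t-x_{t-k}\le(\underline C+(k-m)V-\overline V)y_{t+m+1}+V\sum_{i=1}^m y_{t+i}+\overline V y_t-\underline C y_{t-k}-\sum_{s\in\mathcal S}(\underline C+(k-s)V-\overline V)(y_{t-s}-y_{t-s-1}),$$ indexed by all $k\in[1,T-1]_{\mathbb Z}$ with $\overline C-\underline C-kV>0$, $m\in[0,k-1]_{\mathbb Z}$, $\mathcal S\subseteq[0,\min\{k-1,L-m-2\}]_{\mathbb Z}$ and $t\in[k+1,T-m-1]_{\mathbb Z}$, and $$x_t-x_{t+k}\le(\underline C+(k-m)V-\overline V)y_{t-m-1}+V\sum_{i=1}^m y_{t-i}+\overline V y_t-\underline C y_{t+k}-\sum_{s\in\mathcal S}(\underline C+(k-s)V-\overline V)(y_{t+s}-y_{t+s+1}),$$ indexed by the same $k,m,\mathcal S$ and $t\in[m+2,T-k]_{\mathbb Z}$. For any given point $(\mathbf x,\mathbf y)\in\mathbb R_+^{2T}$, a most violated inequality of each family can be determined in $O(T^3)$ time if a violated inequality of that family exists.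
   Context: For integers $a,b$, $[a,b]_{\mathbb Z}=\{a,a+1,\dots,b\}$ if $a\le b$ and $\emptyset$ otherwise. Fix a positive integer $T$, a positive integer $L$ (minimum up time), and reals $\overline C,\underline C,V,\overline V$ with $\overline C>\underline C>0$, $V>0$, $\overline V+V\le\overline C$ and $\underline C<\overline V<\underline C+V$; $\mathbf x=(x_1,\dots,x_T)$, $\mathbf y=(y_1,\dots,y_T)$. For an inequality $a^\top(\mathbf x,\mathbf y)\le b$, its violation at a given point is $a^\top(\mathbf x,\mathbf y)-b$; it is violated if this is positive, and a most violated inequality of a family is one maximizing this quantity over the family. Time is measured in arithmetic operations and comparisons on the input numbers. *)

From HB Require Import structures.
From mathcomp Require Import all_boot all_order all_algebra.
From mathcomp Require Import reals.
Set Implicit Arguments. Unset Strict Implicit. Unset Printing Implicit Defensive.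
Import Order.TTheory GRing.Theory Num.Theory.
Local Open Scope ring_scope.

(* Model of computation: algebraic computation trees over an abstract value  *)
(* type [Val].  Each arithmetic operation, constant load and comparison on   *)
(* numbers costs one unit; control flow / index bookkeeping on [nat] is free *)
(* (time is measured in arithmetic operations and comparisons on the input   *)
(* numbers).  Algorithms are polymorphic in [Val], so (by parametricity)     *)
(* they can only access numbers through the primitives below.               *)

Inductive binop := OpAdd | OpSub | OpMul | OpDiv.

Inductive comp (Val A : Type) : Type :=
| Ret of A
| Cst of int & (Val -> comp Val A)
| Op of binop & Val & Val & (Val -> comp Val A)
| Cmp of Val & Val & (bool -> comp Val A).

Definition eval_binop (R : realType) (o : binop) (a b : R) : R :=
  match o with
  | OpAdd => a + b | OpSub => a - b | OpMul => a * b | OpDiv => a / b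
  end.

Fixpoint run (R : realType) (A : Type) (c : comp R A) : A * nat :=
  match c with
  | Ret a => (a, 0%N)
  | Cst z k => let r := run (k (z%:~R)) in (r.1, r.2.+1)
  | Op o a b k => let r := run (k (eval_binop o a b)) in (r.1, r.2.+1)
  | Cmp a b k => let r := run (k (a <= b)) in (r.1, r.2.+1)
  end.

(* An inequality index (k, m, S, t); S is a duplicate-free list of naturals. *)
Definition ineq_idx := (nat * nat * seq nat * nat)%type.

(* Input: T, L, Cbar, Cunder, V, Vbar, x, y (x_i, y_i for i in 1..T).
   Output: [Some i] for a (claimed) most violated inequality, or [None]. *)
Definition separation_alg :=
  forall Val : Type, nat -> nat -> Val -> Val -> Val -> Val ->
    (nat -> Val) -> (nat -> Val) -> comp Val (option ineq_idx).

Section Families.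
Variables (R : realType) (T L : nat) (Cb Cu V Vb : R) (x y : nat -> R).

Definition kmS_ok (k m : nat) (S : seq nat) : bool :=
  [&& (1 <= k)%N, (k <= T - 1)%N, 0 < Cb - Cu - k%:R * V, (m <= k - 1)%N,
      uniq S & all (fun s => (s <= k - 1)%N && (s + m + 2 <= L)%N) S].

Definition fam1 (i : ineq_idx) : bool :=
  let: (k, m, Ss, t) := i in
  [&& kmS_ok k m Ss, (k + 1 <= t)%N & (t + m + 1 <= T)%N].

Definition fam2 (i : ineq_idx) : bool :=
  let: (k, m, Ss, t) := i in
  [&& kmS_ok k m Ss, (m + 2 <= t)%N & (t + k <= T)%N].

Definition coef (k j : nat) : R := Cu + (k%:R - j%:R) * V - Vb.

Definition viol1 (i : ineq_idx) : R :=
  let: (k, m, Ss, t) := i in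
  (x t - x (t - k)) -
  (coef k m * y (t + m + 1) + V * (\sum_(1 <= j < m.+1) y (t + j))
   + Vb * y t - Cu * y (t - k)
   - \sum_(s <- Ss) coef k s * (y (t - s) - y (t - s - 1))).

Definition viol2 (i : ineq_idx) : R :=
  let: (k, m, Ss, t) := i in
  (x t - x (t + k)) -
  (coef k m * y (t - m - 1) + V * (\sum_(1 <= j < m.+1) y (t - j))
   + Vb * y t - Cu * y (t + k)
   - \sum_(s <- Ss) coef k s * (y (t + s) - y (t + s + 1))).

Definition most_violated_spec (fam : ineq_idx -> bool) (viol : ineq_idx -> R)
  (out : option ineq_idx) : Prop :=
  (exists i, fam i /\ 0 < viol i) ->
  exists i, [/\ out = Some i, fam i & forall j, fam j -> viol j <= viol i].

End Families.

Definition params_ok (R : realType) (T L : nat) (Cb Cu V Vb : R) : Prop :=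
  [/\ (0 < T)%N, (0 < L)%N, Cu < Cb & 0 < Cu] /\
  [/\ 0 < V, Vb + V <= Cb, Cu < Vb & Vb < Cu + V].

(* For fixed k, m and t the right-hand side depends on S only through the subtracted sum of
   the terms g_s = (C + (k - s) V - Vbar) (y_(t-s) - y_(t-s-1)), so the best admissible S
   consists of the s < min(k, L - m - 1) with g_s > 0.  Prefix tables (over n) of these greedy
   sums and (over m) of the window sums of y cost O(k) per pair (k, t), after which each of the
   at most k values of m is evaluated in O(1): O(T^3) in total, and the running maximum over all
   (k, m, t) is a most violated inequality.  The second family is the first one for the
   time-reversed data x_(T+1-t), y_(T+1-t). *)

From Pilot Require Import Defs.
From mathcomp Require Import all_boot all_order all_algebra.
From mathcomp Require Import reals.
From mathcomp Require Import zify.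
Import Order.TTheory GRing.Theory Num.Theory.
Local Open Scope ring_scope.
Set Implicit Arguments. Unset Strict Implicit. Unset Printing Implicit Defensive.

Section Combinators.
Variable Val : Type.

Fixpoint bind A B (c : Defs.comp Val A) (f : A -> Defs.comp Val B) : Defs.comp Val B :=
  match c with
  | Ret a => f a
  | Cst z k => Cst z (fun v => bind (k v) f)
  | Op o a b k => Op o a b (fun v => bind (k v) f)
  | Cmp a b k => Cmp a b (fun v => bind (k v) f)
  end.

Fixpoint foldM A B (f : A -> B -> Defs.comp Val A) (a : A) (l : seq B) : Defs.comp Val A :=
  if l is b :: l' then bind (f a b) (fun a' => foldM f a' l') else Ret Val a.

Fixpoint scan A (n : nat) (a0 : A) (step : nat -> A -> Defs.comp Val A) :
    Defs.comp Val (nat -> A) :=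
  if n is n'.+1 then
    bind (scan n' a0 step) (fun tab => bind (step n' (tab n')) (fun a =>
      Ret Val (fun i => if i == n'.+1 then a else tab i)))
  else Ret Val (fun _ => a0).

Definition update I (st : option (Val * I)) (v : Val) (i : I) :
    Defs.comp Val (option (Val * I)) :=
  if st is Some b then Cmp v b.1 (fun le => Ret Val (if le then st else Some (v, i)))
  else Ret Val (Some (v, i)).

End Combinators.

Section Run.
Variable R : realType.

Lemma run_bind A B (c : Defs.comp R A) (f : A -> Defs.comp R B) :
  run (bind c f) = ((run (f (run c).1)).1, ((run c).2 + (run (f (run c).1)).2)%N).
Proof.
elim: c => [a|z k IH|o a b k IH|a b k IH] /=; first by case: (run (f a)).
all: by rewrite IH.
Qed.

Lemma run_foldM_flatten A (B : eqType) C (f : A -> B -> Defs.comp R A)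
    (h : A -> C -> A) (g : B -> seq C) a l :
  (forall a b, b \in l -> (run (f a b)).1 = foldl h a (g b)) ->
  (run (foldM f a l)).1 = foldl h a (flatten (map g l)).
Proof.
elim: l a => [|b l IH] a fP //=.
rewrite run_bind /= fP ?mem_head // foldl_cat IH // => a' b' b'l.
by apply: fP; rewrite inE b'l orbT.
Qed.

Lemma run_foldM_cost A (B : eqType) (f : A -> B -> Defs.comp R A) a (l : seq B) K :
  (forall a b, b \in l -> ((run (f a b)).2 <= K)%N) ->
  ((run (foldM f a l)).2 <= size l * K)%N.
Proof.
elim: l a => [|b l IH] a fK //=; rewrite run_bind /= mulSn leq_add ?fK ?mem_head //.
by apply: IH => a' b' b'l; apply: fK; rewrite inE b'l orbT.
Qed.

Lemma run_scan A n (a0 : A) (step : nat -> A -> Defs.comp R A) (g : nat -> A -> A) :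
  (forall s a, (run (step s a)).1 = g s a) ->
  forall i, (i <= n)%N ->
  (run (scan n a0 step)).1 i = foldl (fun a s => g s a) a0 (iota 0 i).
Proof.
move=> stepE; elim: n => [|n IH] i le_in /=; first by move: le_in; rewrite leqn0 => /eqP ->.
rewrite !run_bind /= stepE; case: eqP => [->|ne_in]; last by apply: IH; lia.
by rewrite IH // -addn1 iotaD foldl_cat.
Qed.

Lemma run_scan_cost A n (a0 : A) (step : nat -> A -> Defs.comp R A) K :
  (forall s a, ((run (step s a)).2 <= K)%N) ->
  ((run (scan n a0 step)).2 <= n * K)%N.
Proof.
move=> stepK; elim: n => [|n IH] //=; rewrite !run_bind /= addn0 mulSn addnC.
exact: leq_add.
Qed.

Definition keep_max I (st : option (R * I)) (c : R * I) : option (R * I) :=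
  if st is Some b then (if c.1 <= b.1 then st else Some c) else Some c.

Lemma run_update I (st : option (R * I)) v (i : I) :
  (run (update st v i)).1 = keep_max st (v, i).
Proof. by case: st. Qed.

Lemma foldl_keep_max (I : eqType) (cs : seq (R * I)) :
  if foldl (@keep_max I) None cs is Some b then b \in cs /\ {in cs, forall c, c.1 <= b.1}
  else cs = [::].
Proof.
elim/last_ind: cs => [|cs c IH] //; rewrite foldl_rcons.
case: (foldl _ None cs) IH => [b [bin bmax]|->] /=; last first.
  by split => [|c']; rewrite ?mem_seq1 // => /eqP ->.
case: ifP => [cb|bc]; split; rewrite ?mem_rcons ?mem_head ?inE ?bin ?orbT //.
  by move=> c'; rewrite mem_rcons inE => /orP [/eqP ->|/bmax].
move=> c'; rewrite mem_rcons inE => /orP [/eqP ->//|/bmax/le_trans]; apply.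
by apply: ltW; rewrite ltNge bc.
Qed.

Lemma most_violated_spec_keep_max (fam : ineq_idx -> bool) (viol : ineq_idx -> R)
    (cs : seq (R * ineq_idx)) :
  {in cs, forall c, fam c.2 /\ viol c.2 = c.1} ->
  (forall i, fam i -> exists2 c, c \in cs & viol i <= c.1) ->
  most_violated_spec fam viol (omap snd (foldl (@keep_max _) None cs)).
Proof.
move=> csP cs_cover [i [fi _]]; have [c cin _] := cs_cover i fi.
have := foldl_keep_max cs; case: foldl => [b [bin bmax]|cs0]; last by rewrite cs0 in cin.
have [fb vb] := csP b bin; exists b.2; split => // j fj.
have [c' c'in le_jc'] := cs_cover j fj; rewrite vb; exact: le_trans le_jc' (bmax _ c'in).
Qed.

End Run.

Lemma sum_le_sum_pos (R : realDomainType) (I : eqType) (r S : seq I) (f : I -> R) :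
  uniq r -> uniq S -> {subset S <= r} ->
  \sum_(s <- S) f s <= \sum_(s <- r | 0 < f s) f s.
Proof.
move=> ur uS sSr; pose g s := if 0 < f s then f s else 0.
have g_ge0 s : 0 <= g s by rewrite /g; case: ifP => // /ltW.
have -> : \sum_(s <- r | 0 < f s) f s = \sum_(s <- r) g s by rewrite big_mkcond.
apply: (@le_trans _ _ (\sum_(s <- S) g s)).
  by apply: ler_sum => s _; rewrite /g; case: (ltP 0 (f s)).
rewrite (perm_big [seq s <- r | s \in S]) /=; last first.
  apply: uniq_perm; rewrite ?filter_uniq // => s.
  by rewrite mem_filter andbC; case sS: (s \in S); rewrite ?andbT ?andbF // sSr.
by rewrite (big_filter r (fun s => s \in S)) big_mkcond; apply: ler_sum => s _; case: ifP.
Qed.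

Section BestSet.
Variables (R : realType) (T L : nat) (Cb Cu V Vb : R) (x y : nat -> R).

Definition gain k t s := coef Cu V Vb k s * (y (t - s) - y (t - s - 1)).

Definition best_set k m t := [seq s <- iota 0 (minn k (L - m.+1)) | 0 < gain k t s].

Definition best_idx k m t : ineq_idx := (k, m, best_set k m t, t).

Lemma fam1_best_idx k m S t :
  fam1 T L Cb Cu V (k, m, S, t) -> fam1 T L Cb Cu V (best_idx k m t).
Proof.
rewrite /= /kmS_ok => /andP [/and5P [-> -> -> -> _] ->] /=.
rewrite andbT filter_uniq ?iota_uniq //=; apply/allP => s.
rewrite mem_filter mem_iota => /andP [_ /andP [_ ?]]; lia.
Qed.

Lemma viol1_le_best k m S t : fam1 T L Cb Cu V (k, m, S, t) ->
  viol1 Cu V Vb x y (k, m, S, t) <= viol1 Cu V Vb x y (best_idx k m t).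
Proof.
rewrite /= /kmS_ok => /andP [/and5P [k_ge1 _ _ _ /andP [uS /allP Sok]] _].
rewrite lerD2l lerN2 lerD2l lerN2 big_filter.
apply: (sum_le_sum_pos (gain k t)); rewrite ?iota_uniq // => s /Sok.
rewrite mem_iota => ?; lia.
Qed.

End BestSet.

Section Algorithm.
Variables (Val : Type) (T L : nat) (Cb Cu V Vb : Val) (x y : nat -> Val).

Definition coef_comp A k j (cont : Val -> Defs.comp Val A) : Defs.comp Val A :=
  Cst (Posz k) (fun kc => Cst (Posz j) (fun jc => Op OpSub kc jc (fun d =>
    Op OpMul d V (fun e => Op OpAdd Cu e (fun f => Op OpSub f Vb cont))))).

Definition gain_step k t s (acc : Val * seq nat) : Defs.comp Val (Val * seq nat) :=
  coef_comp k s (fun c => Op OpSub (y (t - s)) (y (t - s - 1)) (fun d => Op OpMul c d (fun g =>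
    Cst 0 (fun z => Cmp g z (fun nonpos => if nonpos then Ret Val acc
      else Op OpAdd acc.1 g (fun v => Ret Val (v, rcons acc.2 s))))))).

Definition ysum_step t j (q : Val) : Defs.comp Val Val :=
  Op OpAdd q (y (t + j.+1)) (@Ret Val Val).

Definition visit_m k t (P : nat -> Val * seq nat) (Q : nat -> Val)
    (st : option (Val * ineq_idx)) m :=
  let n := minn k (L - m.+1) in
  Op OpSub (x t) (x (t - k)) (fun lhs => coef_comp k m (fun cm =>
  Op OpMul cm (y (t + m + 1)) (fun r1 => Op OpMul V (Q m) (fun r2 =>
  Op OpAdd r1 r2 (fun r3 => Op OpMul Vb (y t) (fun r4 => Op OpAdd r3 r4 (fun r5 =>
  Op OpMul Cu (y (t - k)) (fun r6 => Op OpSub r5 r6 (fun r7 =>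
  Op OpSub r7 (P n).1 (fun rhs => Op OpSub lhs rhs (fun v =>
    update st v (k, m, (P n).2, t)))))))))))).

Definition search_t k st t :=
  Cst 0 (fun z => bind (scan k (z, [::]) (gain_step k t)) (fun P =>
    bind (scan k z (ysum_step t)) (fun Q =>
      foldM (visit_m k t P Q) st (iota 0 (minn k (T - t)))))).

Definition search_k st k :=
  Cst (Posz k) (fun kc => Op OpMul kc V (fun kV => Op OpSub Cb Cu (fun d =>
  Op OpSub d kV (fun slack => Cst 0 (fun z => Cmp slack z (fun nonpos =>
    if nonpos then Ret Val st else foldM (search_t k) st (iota k.+1 (T - k)))))))).

Definition most_violated1 : Defs.comp Val (option ineq_idx) :=
  bind (foldM search_k None (iota 1 T.-1)) (fun st => Ret Val (omap snd st)).

End Algorithm.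

Section Correctness.
Variables (R : realType) (T L : nat) (Cb Cu V Vb : R) (x y : nat -> R).

Definition cand k m t : R * ineq_idx :=
  (viol1 Cu V Vb x y (best_idx L Cu V Vb y k m t), best_idx L Cu V Vb y k m t).

Definition candidates_t k t := [seq cand k m t | m <- iota 0 (minn k (T - t))].

Definition candidates_k k :=
  if 0 < Cb - Cu - k%:R * V then flatten [seq candidates_t k t | t <- iota k.+1 (T - k)]
  else [::].

Definition candidates := flatten [seq candidates_k k | k <- iota 1 T.-1].

Lemma run_gain_table k t n : (n <= k)%N ->
  (run (scan k (0, [::]) (gain_step Cu V Vb y k t))).1 n =
  (\sum_(s <- [seq s <- iota 0 n | 0 < gain Cu V Vb y k t s]) gain Cu V Vb y k t s,
   [seq s <- iota 0 n | 0 < gain Cu V Vb y k t s]).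
Proof.
move=> le_nk; rewrite (@run_scan _ _ _ _ _ (fun s acc => if 0 < gain Cu V Vb y k t s
  then (acc.1 + gain Cu V Vb y k t s, rcons acc.2 s) else acc)) {le_nk}//; last first.
  move=> s acc /=; rewrite (_ : _ <= _ = ~~ (0 < gain Cu V Vb y k t s)) ?leNgt //.
  by case: (0 < gain Cu V Vb y k t s).
elim: n => [|n IH]; first by rewrite big_nil.
rewrite -addn1 iotaD foldl_cat /= IH.
rewrite filter_cat /=; case: ifP => _; last by rewrite cats0.
by rewrite cats1 big_rcons.
Qed.

Lemma run_ysum_table k t m : (m <= k)%N ->
  (run (scan k 0 (ysum_step y t))).1 m = \sum_(1 <= j < m.+1) y (t + j).
Proof.
move=> le_mk; rewrite (@run_scan _ _ _ _ _ (fun j q => q + y (t + j.+1))) {le_mk}//.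
elim: m => [|m IH]; first by rewrite big_geq.
by rewrite -addn1 iotaD foldl_cat /= IH addn1 [in RHS]big_nat_recr.
Qed.

Lemma run_visit_m k t P Q st m : (m < k)%N ->
  (forall n, (n <= k)%N -> P n = (\sum_(s <- [seq s <- iota 0 n | 0 < gain Cu V Vb y k t s])
     gain Cu V Vb y k t s, [seq s <- iota 0 n | 0 < gain Cu V Vb y k t s])) ->
  (forall j, (j <= k)%N -> Q j = \sum_(1 <= i < j.+1) y (t + i)) ->
  (run (visit_m L Cu V Vb x y k t P Q st m)).1 = keep_max st (cand k m t).
Proof.
by move=> lt_mk PE QE; rewrite /= run_update PE ?geq_minl // QE 1?ltnW.
Qed.

Lemma run_search_t k st t :
  (run (search_t T L Cu V Vb x y k st t)).1 = foldl (@keep_max _ _) st (candidates_t k t).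
Proof.
rewrite /= !run_bind /=.
rewrite (run_foldM_flatten (h := @keep_max R ineq_idx) (g := fun m => [:: cand k m t]))
  ?flatten_map1 //.
move=> st' m; rewrite mem_iota => m_lt /=; apply: run_visit_m; first by lia.
  exact: run_gain_table.
exact: run_ysum_table.
Qed.

Lemma run_search_k k st :
  (run (search_k T L Cb Cu V Vb x y st k)).1 = foldl (@keep_max _ _) st (candidates_k k).
Proof.
rewrite /= /candidates_k (_ : _ <= _ = ~~ (0 < Cb - Cu - k%:R * V)) ?leNgt //.
case: (0 < _) => //=.
rewrite (run_foldM_flatten (h := @keep_max R ineq_idx) (g := candidates_t k)) //.
by move=> st' t _; apply: run_search_t.
Qed.

Lemma run_most_violated1 :
  (run (most_violated1 T L Cb Cu V Vb x y)).1 =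
  omap snd (foldl (@keep_max _ _) None candidates).
Proof.
rewrite run_bind /= (run_foldM_flatten (h := @keep_max R ineq_idx) (g := candidates_k)) //.
by move=> st k _; apply: run_search_k.
Qed.

Lemma candidates_fam1 :
  {in candidates, forall c, fam1 T L Cb Cu V c.2 /\ viol1 Cu V Vb x y c.2 = c.1}.
Proof.
move=> c /flatten_mapP [k]; rewrite mem_iota /candidates_k => k_rng.
case: ifP => // slack_pos /flatten_mapP [t]; rewrite mem_iota => t_rng.
move=> /mapP [m]; rewrite mem_iota => m_rng ->; split => //.
apply: (fam1_best_idx _ _ (S := [::])).
rewrite /= /kmS_ok slack_pos /=; lia.
Qed.

Lemma candidates_cover i : fam1 T L Cb Cu V i ->
  exists2 c, c \in candidates & viol1 Cu V Vb x y i <= c.1.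
Proof.
case: i => [[[k m] S] t] fi; exists (cand k m t); last exact: (viol1_le_best _ _ _ fi).
move: (fi) => /andP [/and5P [k_ge1 k_le slack_pos m_le _] /andP [t_ge t_le]].
apply/flatten_mapP; exists k; first by rewrite mem_iota; lia.
rewrite /candidates_k slack_pos; apply/flatten_mapP; exists t; first by rewrite mem_iota; lia.
by apply: map_f; rewrite mem_iota; lia.
Qed.

Lemma most_violated1_spec :
  most_violated_spec (fam1 T L Cb Cu V) (viol1 Cu V Vb x y)
    (run (most_violated1 T L Cb Cu V Vb x y)).1.
Proof.
rewrite run_most_violated1; apply: most_violated_spec_keep_max.
  exact: candidates_fam1.
exact: candidates_cover.
Qed.

End Correctness.

Section Cost.
Variables (R : realType) (T L : nat) (Cb Cu V Vb : R) (x y : nat -> R).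

Lemma gain_step_cost k t s acc : ((run (gain_step Cu V Vb y k t s acc)).2 <= 11)%N.
Proof. by rewrite /=; case: ifP. Qed.

Lemma visit_m_cost k t P Q st m : ((run (visit_m L Cu V Vb x y k t P Q st m)).2 <= 17)%N.
Proof. by rewrite /=; case: st. Qed.

Lemma search_t_cost k st t : ((run (search_t T L Cu V Vb x y k st t)).2 <= 29 * k + 1)%N.
Proof.
rewrite /= !run_bind /=.
set c1 := (run (scan k _ _)).2; set c2 := (run (scan k _ _)).2; set c3 := (run (foldM _ _ _)).2.
have c1K : (c1 <= k * 11)%N by apply: run_scan_cost => s acc; apply: gain_step_cost.
have c2K : (c2 <= k * 1)%N by apply: run_scan_cost.
have c3K : (c3 <= minn k (T - t) * 17)%N.
  rewrite -(size_iota 0 (minn k (T - t))); apply: run_foldM_cost => st' m _.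
  exact: visit_m_cost.
lia.
Qed.

Lemma search_k_cost k st : (k <= T)%N ->
  ((run (search_k T L Cb Cu V Vb x y st k)).2 <= 6 + T * (29 * T + 1))%N.
Proof.
move=> le_kT; rewrite /=; case: ifP => _ //=.
have : ((run (foldM (search_t T L Cu V Vb x y k) st (iota k.+1 (T - k)))).2
         <= size (iota k.+1 (T - k)) * (29 * k + 1))%N.
  by apply: run_foldM_cost => st' t _; apply: search_t_cost.
rewrite size_iota; have : ((T - k) * (29 * k + 1) <= T * (29 * T + 1))%N.
  by apply: leq_mul; lia.
lia.
Qed.

Lemma most_violated1_cost : ((run (most_violated1 T L Cb Cu V Vb x y)).2 <= 36 * T ^ 3)%N.
Proof.
rewrite run_bind /= addn0.
apply: leq_trans (@run_foldM_cost R _ _ _ _ _ (6 + T * (29 * T + 1)) _) _.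
  by move=> st k; rewrite mem_iota => k_rng; apply: search_k_cost; lia.
rewrite size_iota; case: T => //= n; nia.
Qed.

End Cost.

Definition mirror (T : nat) (i : ineq_idx) : ineq_idx :=
  let: (k, m, Ss, t) := i in (k, m, Ss, (T.+1 - t)%N).

Definition most_violated2 Val T L (Cb Cu V Vb : Val) (x y : nat -> Val) :
    Defs.comp Val (option ineq_idx) :=
  bind (most_violated1 T L Cb Cu V Vb (fun i => x (T.+1 - i)%N) (fun i => y (T.+1 - i)%N))
    (fun o => Ret Val (omap (mirror T) o)).

Section Mirror.
Variables (R : realType) (T L : nat) (Cb Cu V Vb : R) (x y : nat -> R).

Lemma fam2_mirror i : fam2 T L Cb Cu V i = fam1 T L Cb Cu V (mirror T i).
Proof.
case: i => [[[k m] S] t] /=; case ok: kmS_ok => //=.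
by move: ok => /and5P [k_ge1 _ _ _ _]; apply/idP/idP; lia.
Qed.

Lemma mirrorK i : fam1 T L Cb Cu V i -> mirror T (mirror T i) = i.
Proof. by case: i => [[[k m] S] t] /andP [_ /andP [_ t_le]] /=; congr (_, _); lia. Qed.

Lemma viol2_mirror i : fam2 T L Cb Cu V i ->
  viol2 Cu V Vb x y i =
  viol1 Cu V Vb (fun i => x (T.+1 - i)%N) (fun i => y (T.+1 - i)%N) (mirror T i).
Proof.
case: i => [[[k m] S] t] /andP [/and5P [k_ge1 _ _ _ /andP [_ /allP Sok]] /andP [t_ge t_le]].
rewrite /= (_ : T.+1 - (T.+1 - t) = t)%N; last by lia.
rewrite (_ : T.+1 - (T.+1 - t - k) = t + k)%N; last by lia.
rewrite (_ : T.+1 - (T.+1 - t + m + 1) = t - m - 1)%N; last by lia.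
congr (_ - (_ + _ * _ + _ - _ - _)).
  by apply: eq_big_nat => j j_rng; congr y; lia.
by apply: eq_big_seq => s /Sok s_rng; congr (_ * (y _ - y _)); lia.
Qed.

Lemma most_violated2_spec :
  most_violated_spec (fam2 T L Cb Cu V) (viol2 Cu V Vb x y)
    (run (most_violated2 T L Cb Cu V Vb x y)).1.
Proof.
rewrite run_bind /= => -[j [f2j vj]].
have [|i [-> f1i imax]] := @most_violated1_spec R T L Cb Cu V Vb
  (fun i => x (T.+1 - i)%N) (fun i => y (T.+1 - i)%N).
  by exists (mirror T j); rewrite -fam2_mirror -viol2_mirror.
have f2i : fam2 T L Cb Cu V (mirror T i) by rewrite fam2_mirror mirrorK.
exists (mirror T i); split => // j' f2j'.
rewrite !viol2_mirror // mirrorK //; apply: imax; by rewrite -fam2_mirror.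
Qed.

Lemma most_violated2_cost : ((run (most_violated2 T L Cb Cu V Vb x y)).2 <= 36 * T ^ 3)%N.
Proof. by rewrite run_bind /= addn0; apply: most_violated1_cost. Qed.

End Mirror.

Theorem proposition12 (R : realType) :
  exists (alg1 alg2 : separation_alg) (c : nat),
  forall (T L : nat) (Cb Cu V Vb : R) (x y : nat -> R),
    params_ok T L Cb Cu V Vb ->
    (forall i, (1 <= i <= T)%N -> 0 <= x i /\ 0 <= y i) ->
    let r1 := run (alg1 R T L Cb Cu V Vb x y) in
    let r2 := run (alg2 R T L Cb Cu V Vb x y) in
    [/\ (r1.2 <= c * T ^ 3)%N,
        most_violated_spec (fam1 T L Cb Cu V) (viol1 Cu V Vb x y) r1.1,
        (r2.2 <= c * T ^ 3)%N &
        most_violated_spec (fam2 T L Cb Cu V) (viol2 Cu V Vb x y) r2.1].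
Proof.
exists (@most_violated1), (@most_violated2), 36%N => T L Cb Cu V Vb x y _ _ /=.
split.
- exact: most_violated1_cost.
- exact: most_violated1_spec.
- exact: most_violated2_cost.
- exact: most_violated2_spec.
Qed.
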